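(* Let $Z$ and $E$ be finite groups with $Z$ abelian and $E$ acting on $Z$ by automorphisms. Let $\mathcal I,\mathcal J$ be $Z\rtimes E$-sets, and let $\overline{\mathcal I},\overline{\mathcal J}$ be the $E$-sets of $Z$-orbits in $\mathcal I$ and $\mathcal J$. Let $\overline{\mathfrak J}:\overline{\mathcal I}\to\overline{\mathcal J}$ be an $E$-equivariant map. Assume: (i) for $\mathcal K\in\{\mathcal I,\mathcal J\}$ every $Z$-orbit in $\mathcal K$ contains an element $x$ with $(ZE)_x=Z_xE_x$; (ii) $Z_x=Z_y$ for every $x\in\mathcal I$ with $Z$-orbit $\overline x$ and every $y\in\overline{\mathfrak J}(\overline x)$; (iii) $\overline{\mathfrak J}$ is a bijection. Then $\overline{\mathfrak J}$ lifts to a $Z\rtimes E$-equivariant bijection $\mathfrak J:\mathcal I\to\mathcal J$ (i.e. $\mathfrak J(x)\in\overline{\mathfrak J}(Z.x)$ for all $x$).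
   Context: For a group acting on a set, $Z_x$, $E_x$, $(ZE)_x$ denote stabilizers of $x$ in $Z$, $E$, $Z\rtimes E$. *)

From mathcomp Require Import all_boot all_fingroup all_solvable.
Set Implicit Arguments. Unset Strict Implicit. Unset Printing Implicit Defensive.

Definition zorbits (gT : finGroupType) (D : {set gT}) (T : finType)
  (to : action D T) (Z : {set gT}) : {set {set T}} :=
  orbit to Z @: [set: T].

From mathcomp Require Import all_boot all_fingroup all_solvable.
Set Implicit Arguments. Unset Strict Implicit. Unset Printing Implicit Defensive.
Open Scope group_scope.

(* Write G = Z ><| E. The proof separates a general principle from the
   group theory of the situation.
   - Lifting principle (equivariant_lift): if R is a G-invariant relation
     between two G-sets and every G-orbit of I contains a point u R-related
     to a point v with the same G-stabilizer, then x.g |-> v.g (for x = u.g)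
     is a well-defined G-equivariant map f with R x (f x), and f reflects
     stabilizers.
   - For a point x with split stabilizer (ZE)_x = Z_x E_x, the E-stabilizer
     of x equals the E-stabilizer of its Z-orbit (split_astab1_zorbit). So
     if x, y both split, Z_x = Z_y, and Jb(Z.x) = Z.y for the E-equivariant
     injective orbit map Jb, then (ZE)_x = (ZE)_y (zorbit_map_stab_pair).
   - The theorem applies the lifting principle to R x y := y \in Jb(Z.x);
     injectivity of the lift follows from that of Jb and from f reflecting
     stabilizers, surjectivity from that of Jb and Z-equivariance. *)

Section Lifting.

Variables (gT : finGroupType) (G : {group gT}) (I J : finType).
Variables (toI : action G I) (toJ : action G J).

Lemma astab1_inE (T : finType) (to : action G T) (A : {set gT}) x a :
  (a \in 'C_A[x | to]) = [&& a \in A, a \in G & to x a == x].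
Proof. by rewrite !inE sub1set inE. Qed.

(* If the stabilizer of u is contained in that of v, then any coincidence
   u.g1 = u.g2 is shared by v; this is what makes x.g |-> v.g well defined. *)
Lemma act_transfer (T1 T2 : finType) (to1 : action G T1) (to2 : action G T2)
    u v g1 g2 :
  'C_G[u | to1] \subset 'C_G[v | to2] -> g1 \in G -> g2 \in G ->
  to1 u g1 = to1 u g2 -> to2 v g1 = to2 v g2.
Proof.
move=> sCuv Gg1 Gg2 eq_ug.
have Gg21 : g1 * g2^-1 \in G by rewrite groupM ?groupV.
have /(subsetP sCuv) : g1 * g2^-1 \in 'C_G[u | to1].
  by rewrite astab1_inE Gg21 actMin ?groupV // eq_ug actKin ?eqxx.
rewrite astab1_inE Gg21 actMin ?groupV // => /eqP eq_vg.
by rewrite -[to2 v g1](actKVin to2 Gg2) eq_vg.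
Qed.

(* It is obtained
   by choosing one such pair (u, v) per orbit and setting f (u.g) = v.g. *)
Lemma equivariant_lift (R : I -> J -> bool) :
  (forall x y g, g \in G -> R x y -> R (toI x g) (toJ y g)) ->
  (forall x, exists2 u, u \in orbit toI G x &
      exists2 v, R u v & 'C_G[u | toI] = 'C_G[v | toJ]) ->
  exists f : I -> J,
    [/\ forall x g, g \in G -> f (toI x g) = toJ (f x) g,
        forall x, R x (f x) &
        forall x g, g \in G -> toJ (f x) g = f x -> toI x g = x].
Proof.
move=> R_inv ex_pair.
pose pick_pair x := [pick p : I * J | (p.1 \in orbit toI G x) && R p.1 p.2
                                       && ('C_G[p.1 | toI] == 'C_G[p.2 | toJ])].
have [rep pick_rep] : exists rep : I -> I * J, forall x, pick_pair x = Some (rep x).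
  apply: (@fin_all_exists I (fun=> (I * J)%type) (fun x p => pick_pair x = Some p)).
  move=> x; rewrite /pick_pair; case: pickP => [p _|no_pair]; first by exists p.
  have [u Gxu [v Ruv Cuv]] := ex_pair x.
  by have := no_pair (u, v); rewrite /= Gxu Ruv Cuv eqxx.
have rep_spec x : [/\ (rep x).1 \in orbit toI G x, R (rep x).1 (rep x).2
                    & 'C_G[(rep x).1 | toI] = 'C_G[(rep x).2 | toJ]].
  move: (pick_rep x); rewrite /pick_pair; case: pickP => // p.
  by case/andP=> /andP[Gxp Rp] /eqP Cp [<-].
have rep_orbit x y : y \in orbit toI G x -> rep y = rep x.
  move=> /(orbit_in_eqP (subxx G)) Gxy.
  by move: (pick_rep y); rewrite /pick_pair Gxy -/(pick_pair x) pick_rep => -[].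
have [tr tr_spec] : exists tr : I -> gT,
    forall x, tr x \in G /\ toI (rep x).1 (tr x) = x.
  apply: (@fin_all_exists I (fun=> gT) (fun x g => g \in G /\ toI (rep x).1 g = x)).
  move=> x; have [Gxu _ _] := rep_spec x.
  rewrite orbit_in_sym // in Gxu.
  by case/orbitP: Gxu => g Gg ug; exists g.
pose f x := toJ (rep x).2 (tr x).
exists f; split.
- move=> x g Gg; have rep_xg := rep_orbit _ _ (mem_orbit toI x Gg).
  have [Gtx trx] := tr_spec x; have [Gtxg] := tr_spec (toI x g).
  rewrite rep_xg => trxg; have [_ _ Cuv] := rep_spec x.
  rewrite /f rep_xg -actMin //.
  apply: (@act_transfer _ _ toI toJ (rep x).1); rewrite ?Cuv ?groupM //.
  by rewrite trxg actMin // trx.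
- move=> x; have [_ Ruv _] := rep_spec x; have [Gtx trx] := tr_spec x.
  by rewrite -{1}trx; apply: R_inv.
move=> x g Gg; have [Gtx trx] := tr_spec x; have [_ _ Cuv] := rep_spec x.
rewrite /f -actMin // => fix_fx.
rewrite -[in LHS]trx -actMin // -[RHS]trx.
by apply: (@act_transfer _ _ toJ toI (rep x).2); rewrite ?Cuv ?groupM.
Qed.

End Lifting.

Lemma setact_zorbit (gT : finGroupType) (Z G : {group gT}) (T : finType)
    (to : action G T) x g :
  Z <| G -> g \in G -> to^* (orbit to Z x) g = orbit to Z (to x g).
Proof.
move=> nZG Gg; have sZG := normal_sub nZG.
have ZgJ : Z :^ g = Z by apply: (normsP (normal_norm nZG)).
apply/setP=> y; rewrite -[g in to^* _ g]invgK setactVin ?groupV // inE.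
by rewrite -{2}[y](actKVin to Gg) -{2}ZgJ orbit_conjsg_in.
Qed.

Section Semidirect.

Variables (gT : finGroupType) (Z E G : {group gT}).
Hypothesis sdG : Z ><| E = G.

Lemma split_astab1_zorbit (T : finType) (to : action G T) x :
  'C_G[x | to] = 'C_Z[x | to] * 'C_E[x | to] ->
  'C_E[x | to] = 'C_E[orbit to Z x | to^*].
Proof.
move=> splitCx; have [nZG sEG _ nZE tiZE] := sdprod_context sdG.
have sZG := normal_sub nZG.
apply/setP=> e; rewrite !astab1_inE; case Ee: (e \in E) => //=.
have Ge := subsetP sEG e Ee; rewrite Ge /= setact_zorbit //.
apply/eqP/eqP=> [-> // | Zx_xe].
have /orbitP[z Zz xz_xe] : to x e \in orbit to Z x by rewrite -Zx_xe orbit_refl.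
have Gz := subsetP sZG z Zz.
have : e * z^-1 \in 'C_G[x | to].
  by rewrite astab1_inE !groupM ?groupV // actMin ?groupV // -xz_xe actKin ?eqxx.
rewrite splitCx => /mulsgP[a b]; rewrite !astab1_inE.
case/and3P=> Za _ _ /and3P[Eb _ /eqP xb] def_ez.
(* e = a * z^(b^-1) * b lies in Z b, hence e = b since Z :&: E = 1. *)
have Zeb : e * b^-1 \in Z.
  have -> : e * b^-1 = a * z ^ b^-1.
    by rewrite -[e](mulgKV z) def_ez /conjg invgK !mulgA.
  by rewrite groupM // memJ_norm ?groupV ?(subsetP nZE).
have : e * b^-1 \in Z :&: E by rewrite inE Zeb groupM ?groupV.
by rewrite tiZE => /set1gP/eqP; rewrite mulg_eq1 invgK => /eqP->.
Qed.

Lemma split_astab1_eq (T1 T2 : finType) (to1 : action G T1) (to2 : action G T2)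
    x y :
  'C_G[x | to1] = 'C_Z[x | to1] * 'C_E[x | to1] ->
  'C_G[y | to2] = 'C_Z[y | to2] * 'C_E[y | to2] ->
  'C_Z[x | to1] = 'C_Z[y | to2] ->
  'C_E[orbit to1 Z x | to1^*] = 'C_E[orbit to2 Z y | to2^*] ->
  'C_G[x | to1] = 'C_G[y | to2].
Proof.
move=> splitCx splitCy eqCZ eqCE.
rewrite splitCx splitCy (split_astab1_zorbit splitCx)
  (split_astab1_zorbit splitCy).
by rewrite eqCZ eqCE.
Qed.

End Semidirect.

Lemma mem_zorbits (gT : finGroupType) (G : {group gT}) (T : finType)
    (to : action G T) (Z : {set gT}) x :
  orbit to Z x \in zorbits to Z.
Proof. by apply: imset_f; rewrite inE. Qed.

Section ZOrbitMap.

Variables (gT : finGroupType) (Z E G : {group gT}) (I J : finType).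
Variables (toI : action G I) (toJ : action G J) (Jb : {set I} -> {set J}).
Hypothesis sdG : Z ><| E = G.
Hypothesis Jb_zorbit : {in zorbits toI Z, forall O, Jb O \in zorbits toJ Z}.
Hypothesis Jb_act : {in zorbits toI Z, forall O, forall e, e \in E ->
  Jb (setact toI O e) = setact toJ (Jb O) e}.

Let sZG : Z \subset G. Proof. by have [/normal_sub] := sdprod_context sdG. Qed.

Lemma zorbit_map_mem x y :
  y \in Jb (orbit toI Z x) -> Jb (orbit toI Z x) = orbit toJ Z y.
Proof.
have /imsetP[w _ ->] := Jb_zorbit (mem_zorbits toI Z x).
by move/(orbit_in_eqP sZG)->.
Qed.

(* An E-equivariant map on Z-orbits is G-equivariant, since G = Z E and Z
   fixes every Z-orbit. *)
Lemma zorbit_map_act x g :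
  g \in G -> Jb (orbit toI Z (toI x g)) = toJ^* (Jb (orbit toI Z x)) g.
Proof.
have [nZG sEG defG _ _] := sdprod_context sdG.
rewrite -{1}defG => /mulsgP[z e Zz Ee ->].
have [Gz Ge] := (subsetP sZG z Zz, subsetP sEG e Ee).
rewrite actMin // -setact_zorbit // orbit_act_in // Jb_act ?mem_zorbits //.
have /imsetP[w _ ->] := Jb_zorbit (mem_zorbits toI Z x).
by rewrite (actMin toJ^*) //= [toJ^* _ z]setact_zorbit // orbit_act_in.
Qed.

Lemma zorbit_map_astab x :
  {in zorbits toI Z &, injective Jb} ->
  'C_E[orbit toI Z x | toI^*] = 'C_E[Jb (orbit toI Z x) | toJ^*].
Proof.
move=> Jb_inj; have [nZG sEG _ _ _] := sdprod_context sdG.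
apply/setP=> e; rewrite !astab1_inE; case Ee: (e \in E) => //=.
have Ge := subsetP sEG e Ee; rewrite Ge /= -Jb_act ?mem_zorbits //.
by rewrite (inj_in_eq Jb_inj) ?mem_zorbits // setact_zorbit ?mem_zorbits.
Qed.

Lemma zorbit_map_stab_pair x :
  (forall x : I, exists2 x', x' \in orbit toI Z x &
      'C_G[x' | toI] = 'C_Z[x' | toI] * 'C_E[x' | toI]) ->
  (forall y : J, exists2 y', y' \in orbit toJ Z y &
      'C_G[y' | toJ] = 'C_Z[y' | toJ] * 'C_E[y' | toJ]) ->
  (forall (x : I) (y : J), y \in Jb (orbit toI Z x) ->
      'C_Z[x | toI] = 'C_Z[y | toJ]) ->
  {in zorbits toI Z &, injective Jb} ->
  exists2 u, u \in orbit toI G x &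
    exists2 v, v \in Jb (orbit toI Z u) & 'C_G[u | toI] = 'C_G[v | toJ].
Proof.
move=> splitI splitJ eqCZ Jb_inj.
have [u Zxu splitCu] := splitI x.
exists u; first exact: subsetP (imsetS _ sZG) u Zxu.
have /imsetP[w _ Jb_Zu] := Jb_zorbit (mem_zorbits toI Z u).
have [v Zwv splitCv] := splitJ w.
have Jb_v : v \in Jb (orbit toI Z u) by rewrite Jb_Zu.
exists v => //; apply: (split_astab1_eq sdG splitCu splitCv (eqCZ _ _ Jb_v)).
by rewrite zorbit_map_astab // (zorbit_map_mem Jb_v).
Qed.

End ZOrbitMap.

Lemma inj_surj_bij (T1 T2 : finType) (f : T1 -> T2) :
  injective f -> (forall y, exists x, f x = y) -> bijective f.
Proof.
move=> f_inj f_surj; apply: inj_card_bij f_inj _.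
have [g fgK] := fin_all_exists f_surj.
exact: leq_card (can_inj fgK).
Qed.

Theorem lemma2p1 (gT : finGroupType) (Z E G : {group gT})
  (I J : finType) (toI : action G I) (toJ : action G J)
  (Jb : {set I} -> {set J}) :
  Z ><| E = G ->
  abelian Z ->
  (* Jb maps Z-orbits of I to Z-orbits of J *)
  {in zorbits toI Z, forall O, Jb O \in zorbits toJ Z} ->
  (* Jb is E-equivariant *)
  {in zorbits toI Z, forall O, forall e, e \in E ->
      Jb (setact toI O e) = setact toJ (Jb O) e} ->
  (* (i) *)
  (forall x : I, exists2 x', x' \in orbit toI Z x &
      'C_G[x' | toI] = 'C_Z[x' | toI] * 'C_E[x' | toI]) ->
  (forall y : J, exists2 y', y' \in orbit toJ Z y &
      'C_G[y' | toJ] = 'C_Z[y' | toJ] * 'C_E[y' | toJ]) ->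
  (* (ii) *)
  (forall (x : I) (y : J), y \in Jb (orbit toI Z x) ->
      'C_Z[x | toI] = 'C_Z[y | toJ]) ->
  (* (iii) Jb is a bijection between the sets of Z-orbits *)
  {in zorbits toI Z &, injective Jb} ->
  Jb @: zorbits toI Z = zorbits toJ Z ->
  exists f : I -> J,
    [/\ bijective f,
        (forall (x : I) (g : gT), g \in G -> f (toI x g) = toJ (f x) g) &
        (forall x : I, f x \in Jb (orbit toI Z x))].
Proof.
move=> sdG _ Jb_zorbit Jb_act splitI splitJ eqCZ Jb_inj Jb_onto.
have sZG : Z \subset G by have [/normal_sub] := sdprod_context sdG.
have Jb_inv x y g : g \in G -> y \in Jb (orbit toI Z x) ->
    toJ y g \in Jb (orbit toI Z (toI x g)).
  by move=> Gg Jb_y; rewrite (zorbit_map_act sdG Jb_zorbit Jb_act _ Gg) mem_setact.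
have [f [f_act f_Jb f_stab]] := equivariant_lift Jb_inv
  (fun x => zorbit_map_stab_pair sdG Jb_zorbit Jb_act x splitI splitJ eqCZ Jb_inj).
exists f; split=> //; apply: inj_surj_bij.
- (* f a = f b forces a, b into one Z-orbit, and Z_(f a) = Z_a then gives a = b *)
  move=> a b fab; have Za_b : orbit toI Z a = orbit toI Z b.
    apply: Jb_inj; rewrite ?mem_zorbits //.
    by rewrite (zorbit_map_mem sdG Jb_zorbit (f_Jb a)) fab
               (zorbit_map_mem sdG Jb_zorbit (f_Jb b)).
  have /orbitP[z Zz def_b] : b \in orbit toI Z a by rewrite Za_b orbit_refl.
  have Gz := subsetP sZG z Zz; move: fab; rewrite -def_b => fab.
  by rewrite f_stab // -f_act // -fab.
- (* w lies in the Z-orbit Jb (Z a) of f a for some a *)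
  move=> w; have : orbit toJ Z w \in Jb @: zorbits toI Z by rewrite Jb_onto mem_zorbits.
  case/imsetP=> _ /imsetP[a _ ->] Jb_Za.
  have /orbitP[z Zz def_fa] : f a \in orbit toJ Z w by rewrite Jb_Za f_Jb.
  have Gz := subsetP sZG z Zz.
  by exists (toI a z^-1); rewrite f_act ?groupV // -def_fa actKin.
Qed.
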